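(* Let $p>0$, real numbers $A<B$, and $n\in\mathbb{N}$. Let $\Omega_{[A,B]}=\{x\in\mathbb{R}^n:\ A\le x_1\le x_2\le\dots\le x_n\le B\}$ and for $b\in\mathbb{R}$ let $q_b(x)=\sum_{i=1}^n\mathrm{ReLU}(x_i-b)$. Then for all $x,y\in\Omega_{[A,B]}$, $$\mathbb{E}_{b\sim U[A,B]}\,|q_b(x)-q_b(y)|^p\ \ge\ \frac{1}{8n(B-A)4^p}\,\|x-y\|_\infty^{p+1}.$$
   Context: $U[A,B]$ denotes the uniform distribution on the interval $[A,B]$. *)

From HB Require Import structures.
From mathcomp Require Import all_boot all_order all_algebra.
From mathcomp Require Import all_classical all_reals all_analysis.
Set Implicit Arguments. Unset Strict Implicit. Unset Printing Implicit Defensive.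
Import Order.TTheory GRing.Theory Num.Theory.
Local Open Scope ring_scope.

Definition relu {R : realType} (t : R) : R := Num.max t 0.

Definition qb {R : realType} {n : nat} (b : R) (x : 'I_n -> R) : R :=
  \sum_(i < n) relu (x i - b).

Definition in_Omega {R : realType} {n : nat} (A B : R) (x : 'I_n -> R) : Prop :=
  (forall i : 'I_n, A <= x i <= B) /\
  (forall i j : 'I_n, (i <= j)%N -> x i <= x j).

Definition supnorm {R : realType} {n : nat} (x : 'I_n -> R) : R :=
  \big[Num.max/0]_(i < n) `|x i|.

From HB Require Import structures.
From mathcomp Require Import all_boot all_order all_algebra.
From mathcomp Require Import all_classical all_reals all_analysis.
From mathcomp Require Import ring lra.
From mathcomp Require Import measurable_realfun.
Import Order.TTheory GRing.Theory Num.Theory.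
Local Open Scope ring_scope.

(* Let g b := q_b x - q_b y.  Every ReLU is 1-Lipschitz, so g is 2n-Lipschitz
   in b.  For a coordinate k with d := x_k - y_k >= 0, monotonicity of x and y
   gives g(y_k) - g(x_k) >= d, so |g| >= d/2 at y_k or at x_k, and therefore
   |g| >= d/4 on a whole interval of length d/(8n) inside [A, B].  Integrating
   |g|^p over that interval against the density 1/(B - A) gives the bound. *)

Section Relu.
Context {R : realType}.

Variant relu_spec (t : R) : R -> Type :=
  | ReluPos of 0 <= t : relu_spec t t
  | ReluNeg of t <= 0 : relu_spec t 0.

Lemma reluP (t : R) : relu_spec t (relu t).
Proof.
rewrite /relu; case: (leP 0 t) => t0; constructor => //; exact: ltW.
Qed.

Lemma relu_lipschitz (s t : R) : `|relu s - relu t| <= `|s - t|.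
Proof.
have := ler_norm (s - t); have := ler_norm (t - s); rewrite distrC => ? ?.
by apply/ler_normlP; case: (reluP s) => ?; case: (reluP t) => ?; split; lra.
Qed.

Definition ramp (a c t : R) := relu (t - a) - relu (t - c).

Lemma ramp_ge0 {a c t : R} : a <= c -> 0 <= ramp a c t.
Proof. by rewrite /ramp => ?; case: (reluP (t - a)) => ?; case: reluP => ?; lra. Qed.

Lemma ramp_le {a c t : R} : a <= c -> ramp a c t <= c - a.
Proof. by rewrite /ramp => ?; case: (reluP (t - a)) => ?; case: reluP => ?; lra. Qed.

Lemma ramp_left {a c t : R} : a <= c -> t <= a -> ramp a c t = 0.
Proof. by rewrite /ramp => ? ?; case: (reluP (t - a)) => ?; case: reluP => ?; lra. Qed.

Lemma ramp_right {a c t : R} : a <= c -> c <= t -> ramp a c t = c - a.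
Proof. by rewrite /ramp => ? ?; case: (reluP (t - a)) => ?; case: reluP => ?; lra. Qed.

End Relu.

Section QB.
Context {R : realType} {n : nat}.
Implicit Types (x y : 'I_n -> R) (a b c : R).

Lemma qb_subE x a c : qb a x - qb c x = \sum_(i < n) ramp a c (x i).
Proof. by rewrite /qb /ramp sumrB. Qed.

Lemma qb_lipschitz x b c : `|qb b x - qb c x| <= n%:R * `|b - c|.
Proof.
rewrite /qb -sumrB; apply: le_trans (ler_norm_sum _ _ _) _.
have step i : `|relu (x i - b) - relu (x i - c)| <= `|b - c|.
  rewrite (_ : `|b - c| = `|x i - b - (x i - c)|) ?relu_lipschitz //.
  by rewrite distrC; congr `|_|; ring.
apply: le_trans (ler_sum _ (fun i _ => step i)) _.
by rewrite sumr_const card_ord mulr_natl.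
Qed.

Definition qgap x y b := qb b x - qb b y.

Lemma qgap_lipschitz x y b c :
  `|qgap x y b - qgap x y c| <= 2 * n%:R * `|b - c|.
Proof.
have -> : qgap x y b - qgap x y c = (qb b x - qb c x) - (qb b y - qb c y).
  by rewrite /qgap; ring.
have := ler_normB (qb b x - qb c x) (qb b y - qb c y).
have := qb_lipschitz x b c; have := qb_lipschitz y b c; lra.
Qed.

(* Between y_k and x_k every ramp of x_i rises at least as much as that of y_i
   (fully for i >= k, not at all for y_i with i <= k), and the k-th one of x
   rises by the whole gap. *)
Lemma qgap_jump x y (k : 'I_n) :
  (forall i j : 'I_n, (i <= j)%N -> x i <= x j) ->
  (forall i j : 'I_n, (i <= j)%N -> y i <= y j) ->
  y k <= x k -> x k - y k <= qgap x y (y k) - qgap x y (x k).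
Proof.
move=> mx my ykxk.
have -> : qgap x y (y k) - qgap x y (x k) =
    \sum_(i < n) (ramp (y k) (x k) (x i) - ramp (y k) (x k) (y i)).
  by rewrite sumrB -!qb_subE /qgap; ring.
rewrite (bigD1 k) //= (ramp_right ykxk (lexx _)) (ramp_left ykxk (lexx _)).
rewrite subr0 lerDl; apply: sumr_ge0 => i _.
case: (leqP k i) => [ki|/ltnW ik].
- by rewrite (ramp_right ykxk (mx _ _ ki)) subr_ge0 ramp_le.
- by rewrite (ramp_left ykxk (my _ _ ik)) subr0 ramp_ge0.
Qed.

Lemma measurable_qb x : measurable_fun setT (fun b => qb b x).
Proof.
rewrite /qb /relu; apply: measurable_sum => i.
by apply: measurable_maxr => //; exact: measurable_funB.
Qed.

End QB.

Section Interval.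
Context {R : realType}.

Lemma lipschitz_norm_ge {f : R -> R} {L e δ b0 : R} :
  0 <= L -> L * δ <= e -> (forall b c, `|f b - f c| <= L * `|b - c|) ->
  2 * e <= `|f b0| -> forall b, `|b - b0| <= δ -> e <= `|f b|.
Proof.
move=> L0 Lδ fL fb0 b bb0.
have near : `|f b0 - f b| <= e.
  apply: le_trans (fL b0 b) _; rewrite distrC.
  exact: le_trans (ler_wpM2l L0 bb0) Lδ.
have := ler_normD (f b) (f b0 - f b); rewrite addrC subrK addrC; lra.
Qed.

Lemma subinterval_near {A B b0 δ : R} :
  0 <= δ -> 2 * δ <= B - A -> A <= b0 <= B ->
  exists a, [/\ A <= a, a + δ <= B &
    forall b, a <= b <= a + δ -> `|b - b0| <= δ].
Proof.
move=> δ0 δAB /andP[Ab0 b0B].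
have [mid|mid] := lerP b0 ((A + B) / 2); [exists b0 | exists (b0 - δ)].
- by split; try lra; move=> b /andP[? ?]; apply/ler_normlP; split; lra.
- by split; try lra; move=> b /andP[? ?]; apply/ler_normlP; split; lra.
Qed.

Local Open Scope classical_set_scope.
Local Open Scope ereal_scope.

Lemma uniform_integral_ge_on_subinterval {A B : R} (AB : (A < B)%R)
    {f : R -> \bar R} {a δ c : R} :
  measurable_fun setT f -> (forall b, 0 <= f b) -> (0 <= c)%R ->
  (A <= a)%R -> (a + δ <= B)%R ->
  (forall b, (a <= b <= a + δ)%R -> c%:E <= f b) ->
  ((B - A)^-1 * (c * δ))%:E <= \int[uniform_prob AB]_b f b.
Proof.
move=> mf f0 c0 Aa aB cf.
rewrite integral_uniform // EFinM; apply: lee_wpmul2l.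
  by rewrite lee_fin invr_ge0 subr_ge0 ltW.
have sub : `[a, (a + δ)%R]%classic `<=` `[A, B]%classic.
  move=> b /=; rewrite !in_itv /= => /andP[ab bd].
  by rewrite (le_trans Aa ab) (le_trans bd aB).
apply: (@le_trans _ _ (\int[lebesgue_measure]_(b in `[a, (a + δ)%R]) f b)).
  apply: (@le_trans _ _ (\int[lebesgue_measure]_(b in `[a, (a + δ)%R]) (cst c%:E b))).
    rewrite integral_cst //= lebesgue_measure_itv /= lte_fin ltrDl.
    case: ltP => [_|δ0]; first by rewrite -EFinD addrAC subrr add0r.
    by rewrite mule0 lee_fin mulr_ge0_le0.
  by apply: ge0_le_integral => //; exact: measurable_funTS.
by apply: ge0_subset_integral => //; exact: measurable_funTS.
Qed.

End Interval.

Lemma qgap_large_on_subinterval {R : realType} {n : nat} {A B : R}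
    {x y : 'I_n -> R} {k : 'I_n} :
  in_Omega A B x -> in_Omega A B y -> y k <= x k ->
  exists a, [/\ A <= a, a + (x k - y k) / (8 * n%:R) <= B &
    forall b, a <= b <= a + (x k - y k) / (8 * n%:R) ->
      (x k - y k) / 4 <= `|qgap x y b|].
Proof.
move=> [Bx mx] [By my] ykxk.
set d := x k - y k; set δ := d / (8 * n%:R).
have n1 : 1 <= n%:R :> R by rewrite ler1n (leq_ltn_trans _ (ltn_ord k)).
have δ0 : 0 <= δ by rewrite divr_ge0 ?subr_ge0 // mulr_ge0 // ler0n.
have Lδ : 2 * n%:R * δ = d / 4.
  by rewrite /δ; field; rewrite gt_eqF // (lt_le_trans ltr01 n1).
have dAB : d <= B - A by move: (Bx k) (By k) => /andP[? ?] /andP[? ?]; rewrite /d; lra.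
have δAB : 2 * δ <= B - A by nra.
have [b0 Ab0B gb0] : exists2 b0, A <= b0 <= B & 2 * (d / 4) <= `|qgap x y b0|.
  have := qgap_jump x y k mx my ykxk; rewrite -/d => jump.
  have := ler_normB (qgap x y (y k)) (qgap x y (x k)).
  have := ler_norm (qgap x y (y k) - qgap x y (x k)).
  have [big|small] := lerP (d / 2) `|qgap x y (y k)|.
  - by exists (y k) => //; lra.
  - by exists (x k) => //; lra.
have [a [Aa aB near]] := subinterval_near δ0 δAB Ab0B.
have L0 : 0 <= 2 * n%:R :> R by rewrite mulr_ge0 // ler0n.
have Lδ_le : 2 * n%:R * δ <= d / 4 by rewrite Lδ.
exists a; split => // b /near.
exact: (lipschitz_norm_ge L0 Lδ_le (qgap_lipschitz x y) gb0).
Qed.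

Lemma qgap_integral_ge {R : realType} {n : nat} (A B : R) (AB : A < B) (p : R)
    (x y : 'I_n -> R) (k : 'I_n) :
  0 < p -> in_Omega A B x -> in_Omega A B y ->
  (((8 * n%:R * (B - A) * 4 `^ p)^-1 * `|x k - y k| `^ (p + 1))%:E <=
   \int[uniform_prob AB]_b (`|qgap x y b| `^ p)%:E)%E.
Proof.
move=> p0; wlog ykxk : x y / y k <= x k => [sym Ox Oy|Ox Oy].
  have [xy|/ltW yx] := leP (y k) (x k); first exact: sym.
  rewrite distrC; under eq_integral => b _ do rewrite /qgap distrC.
  exact: sym yx Oy Ox.
have [a [Aa aB large]] := qgap_large_on_subinterval Ox Oy ykxk.
rewrite ger0_norm ?subr_ge0 //; set d := x k - y k in large aB *.
have d0 : 0 <= d by rewrite subr_ge0.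
have n0 : n%:R != 0 :> R by rewrite pnatr_eq0 -lt0n (leq_ltn_trans _ (ltn_ord k)).
have mg : measurable_fun setT (fun b => (`|qgap x y b| `^ p)%:E).
  apply/measurable_EFinP; apply: (measurableT_comp (measurable_powR p)).
  apply: (measurableT_comp (@normr_measurable R _)).
  exact: measurable_funB (measurable_qb x) (measurable_qb y).
apply: le_trans
  (uniform_integral_ge_on_subinterval (c := (d / 4) `^ p) AB mg _ _ Aa aB _).
- rewrite lee_fin powRD ?(gt_eqF (addr_gt0 p0 ltr01)) // powRr1 //.
  have -> : d `^ p = (d / 4) `^ p * 4 `^ p.
    by rewrite -powRM ?divr_ge0 // divfK // pnatr_eq0.
  rewrite le_eqVlt; apply/orP; left; apply/eqP; field.
  by rewrite n0 subr_eq0 (gt_eqF AB) gt_eqF ?powR_gt0.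
- by move=> b; rewrite lee_fin powR_ge0.
- by rewrite powR_ge0.
- move=> b /large db; rewrite lee_fin.
  by apply: ge0_ler_powR; rewrite ?nnegrE ?(ltW p0) ?divr_ge0 ?normr_ge0.
Qed.

Lemma supnorm_attained {R : realType} {n : nat} (z : 'I_n.+1 -> R) :
  exists k, supnorm z = `|z k|.
Proof.
have [k _ attained] := @Order.TotalTheory.eq_bigmax _ R _ 0 ord0 xpredT
  (fun i => `|z i|) isT (fun _ _ => normr_ge0 _).
by exists k; exact: attained.
Qed.

Theorem mainTheorem8 (R : realType) (p A B : R) (n : nat)
  (hp : 0 < p) (AB : A < B) (x y : 'I_n -> R) :
  in_Omega A B x -> in_Omega A B y ->
  (\int[uniform_prob AB]_b ((`|qb b x - qb b y|) `^ p)%:E >=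
   ((8 * n%:R * (B - A) * 4 `^ p)^-1 * (supnorm (fun i => x i - y i)) `^ (p + 1))%:E)%E.
Proof.
case: n x y => [|n] x y Ox Oy.
  rewrite mulr0n mulr0 !mul0r invr0 mul0r.
  by apply: integral_ge0 => b _; rewrite lee_fin powR_ge0.
have [k ->] := supnorm_attained (fun i => x i - y i).
exact: qgap_integral_ge.
Qed.
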